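(* Let $V$ be a non-empty set with a reflexive and symmetric relation $R$ satisfying the two axioms stated in the context, and let $\mathcal{G}$ be its exchange graph. If for every face $\mathcal{F}$ of $\mathcal{G}$ there exists a projection $P:\mathcal{G}\to\mathcal{F}$, then $\mathcal{G}$ has the non-leaving-face property.
   Context: Elements $x,y\in V$ are called compatible if $(x,y)\in R$. The axioms are: (i) all maximal subsets of pairwise compatible elements of $V$ are finite and have the same cardinality $n$; these maximal subsets are called clusters; (ii) every subset of $n-1$ pairwise compatible elements is contained in exactly two clusters. The exchange graph $\mathcal{G}$ has the clusters as vertices, two clusters being joined by an edge iff their intersection has cardinality $n-1$ ($\mathcal{G}$ need not be connected). For a set $U$ of pairwise compatible elements, the face $\mathcal{F}_U$ is the full subgraph of $\mathcal{G}$ whose vertices are exactly the clusters containing $U$. A geodesic between two vertices is a path between them of minimal length. $\mathcal{G}$ has the non-leaving-face property if every geodesic connecting two vertices of $\mathcal{G}$ lies in the minimal face containing both vertices. A projection onto a face $\mathcal{F}$ is a map $P$ from the vertices of $\mathcal{G}$ to the vertices of $\mathcal{F}$ such that: (P2) $P(v)=v$ for every vertex $v$ of $\mathcal{F}$; (P3) if $v,w$ are joined by an edge of $\mathcal{G}$, then either $P(v)=P(w)$ or $P(v),P(w)$ are joined by an edge of $\mathcal{F}$; (P4) if $v,w$ are joined by an edge of $\mathcal{G}$ with $v\in\mathcal{F}$ and $w\notin\mathcal{F}$, then $P(v)=P(w)$. *)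

From Stdlib Require Import List.
Import ListNotations.


Definition compatible_set {V : Type} (R : V -> V -> Prop) (U : V -> Prop) : Prop :=
  forall x y, U x -> U y -> R x y.

Definition subset {V : Type} (A B : V -> Prop) : Prop := forall x, A x -> B x.

Definition is_cluster {V : Type} (R : V -> V -> Prop) (C : V -> Prop) : Prop :=
  compatible_set R C /\
  (forall U, compatible_set R U -> subset C U -> subset U C).

Definition has_card {V : Type} (A : V -> Prop) (k : nat) : Prop :=
  exists l : list V, NoDup l /\ length l = k /\ (forall x, A x <-> In x l).

Definition axiom_i {V : Type} (R : V -> V -> Prop) (n : nat) : Prop :=
  forall C, is_cluster R C -> has_card C n.

Definition axiom_ii {V : Type} (R : V -> V -> Prop) (n : nat) : Prop :=
  forall U, compatible_set R U -> has_card U (n - 1) ->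
    exists C1 C2, is_cluster R C1 /\ is_cluster R C2 /\ C1 <> C2 /\
      subset U C1 /\ subset U C2 /\
      (forall C, is_cluster R C -> subset U C -> C = C1 \/ C = C2).

Definition vertex {V : Type} (R : V -> V -> Prop) : Type := { C : V -> Prop | is_cluster R C }.

Definition adj {V : Type} (R : V -> V -> Prop) (n : nat) (v w : vertex R) : Prop :=
  has_card (fun x => proj1_sig v x /\ proj1_sig w x) (n - 1).

(* is_walk e v p w : v, p_1, ..., p_k is a walk in e ending at w; its length is length p *)
Fixpoint is_walk {T : Type} (e : T -> T -> Prop) (v : T) (p : list T) (w : T) : Prop :=
  match p with
  | [] => v = w
  | x :: p' => e v x /\ is_walk e x p' w
  end.

Definition geodesic {V : Type} (R : V -> V -> Prop) (n : nat)
    (v : vertex R) (p : list (vertex R)) (w : vertex R) : Prop :=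
  is_walk (adj R n) v p w /\
  (forall q, is_walk (adj R n) v q w -> length p <= length q).

Definition in_face {V : Type} (R : V -> V -> Prop) (U : V -> Prop) (u : vertex R) : Prop :=
  subset U (proj1_sig u).

Definition minimal_face {V : Type} (R : V -> V -> Prop) (U : V -> Prop) (v w : vertex R) : Prop :=
  compatible_set R U /\ in_face R U v /\ in_face R U w /\
  (forall U', compatible_set R U' -> in_face R U' v -> in_face R U' w ->
     forall u, in_face R U u -> in_face R U' u).

(* non-leaving-face property: every geodesic lies in the minimal face containing its ends
   (the face is a full subgraph, so it suffices that all vertices of the geodesic lie in it) *)
Definition non_leaving_face {V : Type} (R : V -> V -> Prop) (n : nat) : Prop :=
  forall v p w, geodesic R n v p w ->
    forall U, minimal_face R U v w -> forall u, In u (v :: p) -> in_face R U u.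

Definition is_projection {V : Type} (R : V -> V -> Prop) (n : nat) (U : V -> Prop)
    (P : vertex R -> vertex R) : Prop :=
  (forall v, in_face R U (P v)) /\
  (forall v, in_face R U v -> P v = v) /\
  (forall v w, adj R n v w -> P v = P w \/ adj R n (P v) (P w)) /\
  (forall v w, adj R n v w -> in_face R U v -> ~ in_face R U w -> P v = P w).

(** A projection onto a face never lengthens a walk, since every edge is either
    collapsed or mapped to an edge of the face, and it fixes the endpoints of a
    walk between two vertices of the face.  If the walk leaves the face, the edge
    by which it first exits is collapsed, so the image is strictly shorter; hence
    a geodesic between two vertices of a face cannot leave it. *)

From Stdlib Require Import List Lia Classical.
Import ListNotations.

Section WalkContraction.

Variables (T : Type) (e : T -> T -> Prop) (F : T -> Prop) (P : T -> T).

Hypothesis P_contracts : forall v w, e v w -> P v = P w \/ e (P v) (P w).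

Lemma is_walk_contract p v w :
  is_walk e v p w ->
  exists q, is_walk e (P v) q (P w) /\ length q <= length p.
Proof.
  revert v; induction p as [|x p IHp]; simpl; intros v Hwalk.
  - subst; exists []; simpl; split; [reflexivity | lia].
  - destruct Hwalk as [Hvx Hwalk].
    destruct (IHp x Hwalk) as [q [Hq Hlen]].
    destruct (P_contracts v x Hvx) as [Heq | Hedge].
    + exists q; rewrite Heq; split; [exact Hq | lia].
    + exists (P x :: q); simpl; split; [split; assumption | lia].
Qed.

Hypothesis P_collapses_exits : forall v w, e v w -> F v -> ~ F w -> P v = P w.

Lemma is_walk_contract_strict_or_stays p v w :
  is_walk e v p w -> F v ->
  exists q, is_walk e (P v) q (P w) /\
    (length q < length p \/ forall u, In u p -> F u).
Proof.
  revert v; induction p as [|x p IHp]; simpl; intros v Hwalk Hv.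
  - subst; exists []; simpl; split; [reflexivity | right; tauto].
  - destruct Hwalk as [Hvx Hwalk].
    destruct (classic (F x)) as [Hx | Hx].
    + destruct (IHp x Hwalk Hx) as [q [Hq Hshort]].
      assert (Hstep : exists q', is_walk e (P v) q' (P w) /\ length q' <= S (length q)).
      { destruct (P_contracts v x Hvx) as [Heq | Hedge].
        - exists q; rewrite Heq; split; [exact Hq | lia].
        - exists (P x :: q); simpl; split; [split; assumption | lia]. }
      destruct Hstep as [q' [Hq' Hlen]].
      exists q'; split; [exact Hq' |].
      destruct Hshort as [Hlt | Hin]; [left; lia |].
      right; intros u [<- | Hu]; auto.
    + rewrite (P_collapses_exits v x Hvx Hv Hx).
      destruct (is_walk_contract p x w Hwalk) as [q [Hq Hlen]].
      exists q; split; [exact Hq | left; lia].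
Qed.

Hypothesis P_fixes : forall v, F v -> P v = v.

Lemma shortest_walk_stays_in_retract p v w :
  is_walk e v p w ->
  (forall q, is_walk e v q w -> length p <= length q) ->
  F v -> F w -> forall u, In u (v :: p) -> F u.
Proof.
  intros Hwalk Hshortest Hv Hw u [<- | Hu]; [exact Hv |].
  destruct (is_walk_contract_strict_or_stays p v w Hwalk Hv) as [q [Hq Hshort]].
  rewrite (P_fixes v Hv), (P_fixes w Hw) in Hq.
  destruct Hshort as [Hlt | Hin]; [| exact (Hin u Hu)].
  specialize (Hshortest q Hq); lia.
Qed.

End WalkContraction.

Theorem lemma3p3 (V : Type) (R : V -> V -> Prop) (n : nat) :
  inhabited V ->
  (forall x, R x x) ->
  (forall x y, R x y -> R y x) ->
  axiom_i R n ->
  axiom_ii R n ->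
  (forall U : V -> Prop, compatible_set R U ->
     exists P : vertex R -> vertex R, is_projection R n U P) ->
  non_leaving_face R n.
Proof.
  intros _ _ _ _ _ Hproj v p w [Hwalk Hshortest] U [HU [Hv [Hw _]]].
  destruct (Hproj U HU) as [P [_ [P_fixes [P_contracts P_collapses_exits]]]].
  exact (shortest_walk_stays_in_retract _ (adj R n) (in_face R U) P
           P_contracts P_collapses_exits P_fixes p v w Hwalk Hshortest Hv Hw).
Qed.
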